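(* Let $t=\lceil\frac{n-\kappa}{2}\rceil$ and $\mathrm{Small}(x)=\mathrm{Small}_t(x)$. Let $u\ne v$ be vertices with $\kappa(u,v)=\kappa$. If $\{u,v\}\notin E$, then $u$ and $v$ are disconnected by $\mathrm{Small}(u)$ or by $\mathrm{Small}(v)$ (in particular at least one of them exists). If $\{u,v\}\in E$, then either $\mathrm{Small}(u)$ exists, $v\in\mathrm{Small}(u)$, and deleting the vertex set $\mathrm{Small}(u)\setminus\{v\}$ together with the edge $\{u,v\}$ disconnects $u$ from $v$; or the same holds with the roles of $u$ and $v$ exchanged.
   Context: $G=(V,E)$ is a finite, simple, connected, undirected, non-complete graph with $n=|V|$; $\kappa$ is its vertex connectivity, assumed $\kappa<n/4$. A cut is a set $U\subset V$ whose removal disconnects $G$; a $\kappa$-cut is a cut of size $\kappa$; a side of $U$ is a connected component of the subgraph induced on $V\setminus U$; $\mathrm{Side}_U(x)$ is the side containing $x\notin U$; a set disconnects two vertices if they lie in different sides of it. For vertices $u\neq v$, $\kappa(u,v)$ is the maximum number of internally vertex-disjoint $u$–$v$ paths, equivalently the minimum size of a set consisting of vertices other than $u,v$ and possibly the edge $\{u,v\}$ whose removal disconnects $u$ from $v$. For a vertex $x$ and $t\le\lceil\frac{n-\kappa}{2}\rceil$, $\mathrm{Small}_t(x)$ denotes, when it exists, the unique $\kappa$-cut $Y$ with $x\notin Y$, $|\mathrm{Side}_Y(x)|\le t$, and $\mathrm{Side}_Y(x)\subseteq\mathrm{Side}_U(x)$ for every $\kappa$-cut $U$ with $x\notin U$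 and $|\mathrm{Side}_U(x)|\le t$ (it exists iff some $\kappa$-cut $U$ with $x\notin U$ has $|\mathrm{Side}_U(x)|\le t$). *)

(* A finite simple graph is a symmetric irreflexive
   relation e on a finType T; the vertex set is T, n = #|T|. *)
From mathcomp Require Import all_boot.
Set Implicit Arguments. Unset Strict Implicit. Unset Printing Implicit Defensive.

Section Graph.
Variable T : finType.
Variable e : rel T.

Definition simple_graph := symmetric e /\ irreflexive e.
Definition graph_connected := forall x y : T, connect e x y.
Definition non_complete := exists x y : T, x != y /\ ~~ e x y.

Definition induced (S : {set T}) : rel T :=
  [rel x y | [&& x \in S, y \in S & e x y]].

Definition same_side (U : {set T}) (x y : T) : bool :=
  [&& x \notin U, y \notin U & connect (induced (~: U)) x y].

Definition disconnects (U : {set T}) (x y : T) : Prop :=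
  x \notin U /\ y \notin U /\ ~~ connect (induced (~: U)) x y.

Definition is_cut (U : {set T}) : Prop :=
  exists x y : T, disconnects U x y.

Definition Side (U : {set T}) (x : T) : {set T} :=
  [set y | same_side U x y].

Definition vertex_connectivity (k : nat) : Prop :=
  (exists U, is_cut U /\ #|U| = k) /\ (forall U, is_cut U -> k <= #|U|).

Definition del_rel (S : {set T}) (b : bool) (u v : T) : rel T :=
  [rel x y | [&& x \notin S, y \notin S, e x y &
     ~~ (b && (((x == u) && (y == v)) || ((x == v) && (y == u))))]].

Definition local_sep (u v : T) (S : {set T}) (b : bool) : Prop :=
  u \notin S /\ v \notin S /\ (b -> e u v) /\ ~~ connect (del_rel S b u v) u v.

Definition local_connectivity (u v : T) (k : nat) : Prop :=
  (exists S b, local_sep u v S b /\ #|S| + b = k) /\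
  (forall S b, local_sep u v S b -> k <= #|S| + b).

Definition is_Small (k t : nat) (x : T) (Y : {set T}) : Prop :=
  [/\ is_cut Y, #|Y| = k, x \notin Y, #|Side Y x| <= t &
      forall U, is_cut U -> #|U| = k -> x \notin U -> #|Side U x| <= t ->
        Side Y x \subset Side U x].

End Graph.

From mathcomp Require Import zify.
From mathcomp Require Import all_boot.
Set Implicit Arguments. Unset Strict Implicit. Unset Printing Implicit Defensive.

(* The heart of the argument is the uncrossing lemma: if x lies in sides of
   size at most t of two kappa-cuts U and U' (where 2t <= n - kappa + 1),
   then the "intersection cut" W0 = (X n X') \ (A n A'), with A, A' the sides
   and X, X' their closures, is again a kappa-cut whose side of x lies in
   A n A'.  This follows from the counting identity
   |W0| + |(X u X') \ (A u A')| = |U| + |U'|, the second set being a large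
   set.  Taking a kappa-cut whose side of x is smallest, uncrossing shows it
   is Small_t(x), which therefore exists as soon as some small side exists.

   For the theorem, a minimum (u,v)-separator leaves a component of size at
   most t on the side of u or of v.  If u, v are non-adjacent the separator
   is a kappa-cut and Small(x) must disconnect u from v, because every vertex
   of a minimum cut has a neighbour in every side.  If u, v are adjacent,
   adding the far endpoint to the separator yields a kappa-cut, and Small(x)
   contains that endpoint and separates u from v once the edge is deleted. *)

Lemma connect_stable (T : finType) (r : rel T) (C : {set T}) a b :
  (forall x y, x \in C -> r x y -> y \in C) -> a \in C -> connect r a b -> b \in C.
Proof.
move=> stableC aC /connectP[p + ->]; elim: p a aC => //= c p IH a aC /andP[ac cp].
exact: IH (stableC _ _ aC ac) cp.
Qed.

Definition component (T : finType) (r : rel T) (x : T) : {set T} :=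
  [set z | connect r x z].

Lemma component_disjoint (T : finType) (r : rel T) x y :
  connect_sym r -> ~~ connect r x y -> component r x :&: component r y = set0.
Proof.
move=> r_sym nxy; apply/setP => z; rewrite !inE; apply/negbTE/negP => /andP[xz yz].
by move: nxy; rewrite (connect_trans xz _) // r_sym.
Qed.

Lemma disjoint_card (T : finType) (A B S : {set T}) :
  A :&: B = set0 -> A \subset ~: S -> B \subset ~: S -> #|A| + #|B| + #|S| <= #|T|.
Proof.
move=> AB AS BS; have := cardsUI A B; rewrite AB cards0.
have ABS : A :|: B \subset ~: S by apply/subUsetP.
have := subset_leq_card ABS; have := cardsC S; lia.
Qed.

(* The counting identity behind uncrossing: for A in X and A' in X', the
   "intersection" and "union" boundaries together have the size of the two
   original boundaries. *)
Lemma card_uncross (T : finType) (A X A' X' : {set T}) :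
  A \subset X -> A' \subset X' ->
  #|(X :&: X') :\: (A :&: A')| + #|(X :|: X') :\: (A :|: A')| =
  #|X :\: A| + #|X' :\: A'|.
Proof.
move=> AX AX'; rewrite !cardsD (setIidPr AX) (setIidPr AX').
rewrite (setIidPr (setISS AX AX')) (setIidPr (setUSS AX AX')).
have := cardsUI X X'; have := cardsUI A A'.
have := subset_leq_card (setISS AX AX'); have := subset_leq_card (setUSS AX AX').
have := subset_leq_card AX.
have := subset_leq_card AX'; lia.
Qed.

Section Sides.
Variables (T : finType) (e : rel T).
Hypothesis e_sym : symmetric e.

Definition fenced (W C : {set T}) : Prop :=
  forall a b, a \in C -> e a b -> b \notin W -> b \in C.

(* Boolean version of is_cut, used to pick an extremal cut. *)
Definition cutb (U : {set T}) : bool :=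
  [exists y, exists z, [&& y \notin U, z \notin U & ~~ connect (induced e (~: U)) y z]].

Lemma cutP (U : {set T}) : reflect (is_cut e U) (cutb U).
Proof.
apply: (iffP existsP) => [[y /existsP[z /and3P[yU zU nyz]]] | [y [z [yU [zU nyz]]]]].
  by exists y, z.
by exists y; apply/existsP; exists z; rewrite yU zU.
Qed.

Lemma induced_connect_sym (S : {set T}) : connect_sym (induced e S).
Proof. by apply: sym_connect_sym => a b; rewrite /induced /= e_sym andbCA. Qed.

Lemma disconnects_sym (W : {set T}) x y : disconnects e W x y -> disconnects e W y x.
Proof. by move=> [xW [yW nxy]]; rewrite /disconnects induced_connect_sym. Qed.

Lemma side_self (U : {set T}) x : x \notin U -> x \in Side e U x.
Proof. by move=> xU; rewrite inE /same_side xU connect0. Qed.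

Lemma side_out (U : {set T}) x y : y \in Side e U x -> y \notin U.
Proof. by rewrite inE /same_side => /and3P[]. Qed.

Lemma side_sub (U : {set T}) x : Side e U x \subset ~: U.
Proof. by apply/subsetP => y; rewrite in_setC; exact: side_out. Qed.

Lemma side_fenced (U : {set T}) x : fenced U (Side e U x).
Proof.
move=> a b; rewrite !inE /same_side => /and3P[xU aU xa] ab bU.
by rewrite /same_side xU bU (connect_trans xa) // connect1 // /induced /= !inE aU bU.
Qed.

Lemma side_edge (U : {set T}) x a b :
  a \in Side e U x -> e a b -> b \in U :|: Side e U x.
Proof.
move=> aA ab; rewrite in_setU; case: (boolP (b \in U)) => //= bU.
exact: side_fenced aA ab bU.
Qed.

Lemma closure_minus_side (U : {set T}) x : (U :|: Side e U x) :\: Side e U x = U.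
Proof.
apply/setP => z; rewrite in_setD in_setU.
by case: (boolP (z \in Side e U x)) => [/side_out/negbTE -> | _]; rewrite ?orbF.
Qed.

Lemma fenced_connect (W C : {set T}) x y :
  fenced W C -> x \in C -> connect (induced e (~: W)) x y -> y \in C.
Proof.
move=> fC; apply: connect_stable => a b aC; rewrite /induced /= !inE.
by case/and3P => _ bW ab; exact: fC aC ab bW.
Qed.

Lemma fenced_disconnects (W C : {set T}) x y :
  fenced W C -> x \in C -> y \notin C -> x \notin W -> y \notin W -> disconnects e W x y.
Proof.
move=> fC xC yC xW yW; do 2!split=> //.
by apply: contra yC; exact: fenced_connect.
Qed.

Lemma fenced_side (W C : {set T}) x : fenced W C -> x \in C -> Side e W x \subset C.
Proof.
move=> fC xC; apply/subsetP => y; rewrite inE /same_side => /and3P[_ _].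
exact: fenced_connect.
Qed.

Lemma side_disjoint (U : {set T}) x y :
  disconnects e U x y -> Side e U x :&: Side e U y = set0.
Proof.
move=> [_ [_ nxy]]; apply/setP => z; rewrite !inE /same_side.
apply/negbTE/negP => /andP[/and3P[_ _ xz] /and3P[_ _ yz]].
by move: nxy; rewrite (connect_trans xz) // induced_connect_sym.
Qed.

Lemma cut_far_vertex (U : {set T}) x : is_cut e U -> exists w, w \notin U :|: Side e U x.
Proof.
move=> [y [z [yU [zU nyz]]]].
case: (boolP (y \in Side e U x)) => [yA | yA]; last by exists y; rewrite in_setU negb_or yU.
case: (boolP (z \in Side e U x)) => [zA | zA]; last by exists z; rewrite in_setU negb_or zU.
move: yA zA nyz; rewrite !inE /same_side => /and3P[_ _ xy] /and3P[_ _ xz].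
by rewrite (connect_trans _ xz) // induced_connect_sym.
Qed.

Lemma del_avoid (S : {set T}) b u v x :
  x \notin S -> component (del_rel e S b u v) x \subset ~: S.
Proof.
move=> xS; apply/subsetP => z; rewrite inE => xz; apply: connect_stable xz;
  last by rewrite in_setC.
by move=> a c _; rewrite /del_rel /= in_setC => /and4P[].
Qed.

Lemma del_rel_false (S : {set T}) u v : del_rel e S false u v =2 induced e (~: S).
Proof. by move=> a c; rewrite /del_rel /induced /= !in_setC andbT. Qed.

Lemma del_rel_sym (S : {set T}) u v : del_rel e S true u v =2 del_rel e S true v u.
Proof. by move=> a c; rewrite /del_rel /= [(_ && _) || _]orbC. Qed.

Lemma del_connect_sym (S : {set T}) b u v : connect_sym (del_rel e S b u v).
Proof.
apply: sym_connect_sym => a c; rewrite /del_rel /= e_sym andbCA.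
by rewrite orbC [(a == v) && _]andbC [(a == u) && _]andbC.
Qed.

Section Connectivity.
Variables (k t : nat).
Hypothesis conn : vertex_connectivity e k.
Hypothesis t_small : 2 * t <= #|T| - k + 1.

Lemma cut_ge (W : {set T}) x y : disconnects e W x y -> k <= #|W|.
Proof. by case: conn => _ min_k dW; apply: min_k; exists x, y. Qed.

(* Every vertex of a minimum cut has a neighbour in every side of it:
   otherwise the cut without that vertex would still be a cut. *)
Lemma min_cut_attached (Y : {set T}) x y :
  #|Y| = k -> x \notin Y -> y \in Y -> exists2 a, a \in Side e Y x & e a y.
Proof.
move=> kY xY yY; case: (boolP [exists a in Side e Y x, e a y]) => [/exists_inP // | none].
have fA : fenced (Y :\ y) (Side e Y x).
  move=> a b aA ab; rewrite in_setD1 negb_and negbK => /orP[/eqP by_ | bY].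
    by move/exists_inPn: none => /(_ a aA); rewrite -by_ ab.
  exact: side_fenced aA ab bY.
have xY' : x \notin Y :\ y by rewrite in_setD1 (negbTE xY) andbF.
have yY' : y \notin Y :\ y by rewrite in_setD1 eqxx.
have yA : y \notin Side e Y x by apply: contraL yY; exact: side_out.
have := cut_ge (fenced_disconnects fA (side_self xY) yA xY' yY').
by have := cardsD1 y Y; rewrite yY; lia.
Qed.

Section Uncross.
Variables (U U' : {set T}) (x : T).
Hypotheses (cutU : is_cut e U) (kU : #|U| = k) (xU : x \notin U)
           (tU : #|Side e U x| <= t).
Hypotheses (kU' : #|U'| = k) (xU' : x \notin U')
           (tU' : #|Side e U' x| <= t).

Local Notation A := (Side e U x).
Local Notation A' := (Side e U' x).
Local Notation X := (U :|: A).
Local Notation X' := (U' :|: A').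
Local Notation W0 := ((X :&: X') :\: (A :&: A')).
Local Notation W1 := ((X :|: X') :\: (A :|: A')).

Let xA : x \in A. Proof. exact: side_self. Qed.
Let xA' : x \in A'. Proof. exact: side_self. Qed.

(* Edges leaving A :&: A' stay in X :&: X', so W0 fences A :&: A'. *)
Let W0_fenced : fenced W0 (A :&: A').
Proof.
move=> a b; rewrite !in_setI => /andP[aA aA'] ab.
by rewrite in_setD [b \in X :&: _]in_setI (side_edge aA ab) (side_edge aA' ab) !andbT negbK in_setI.
Qed.

Let W1_fenced : fenced W1 (~: (X :|: X')).
Proof.
move=> a b; rewrite !in_setC => aX ab bW1; apply: contra aX => bX.
have : b \in A :|: A' by move: bW1; rewrite in_setD bX andbT negbK.
rewrite e_sym in ab; case/setUP => [bA | bA']; rewrite in_setU.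
  by rewrite (side_edge bA ab).
by rewrite (side_edge bA' ab) orbT.
Qed.

(* The union boundary is large: it is either a cut or the complement of
   A :|: A', which has at most 2t - 1 vertices. *)
Let W1_large : k <= #|W1|.
Proof.
case: (set_0Vmem (~: (X :|: X'))) => [full | [w wX]].
  have XT : X :|: X' = setT by rewrite -[X :|: X']setCK full setC0.
  have := cardsC (A :|: A'); have := cardsUI A A'.
  have : 0 < #|A :&: A'| by apply/card_gt0P; exists x; rewrite in_setI xA xA'.
  rewrite XT setTD; lia.
apply: (@cut_ge _ w x (fenced_disconnects W1_fenced wX _ _ _)).
- by rewrite in_setC !in_setU xA orbT.
- by move: wX; rewrite !inE => /negbTE ->; rewrite andbF.
- by rewrite in_setD in_setU xA.
Qed.

(* By the counting identity, |W0| = 2 kappa - |W1| <= kappa. *)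
Let W0_small : #|W0| <= k.
Proof.
have := card_uncross (subsetUr U A) (subsetUr U' A').
by rewrite !closure_minus_side kU kU'; have := W1_large; lia.
Qed.

Lemma uncross : exists W,
  [/\ is_cut e W, #|W| = k, x \notin W & Side e W x \subset Side e U x :&: Side e U' x].
Proof.
have [w wX] := cut_far_vertex x cutU.
have wA : w \notin A by apply: contra wX; rewrite in_setU => ->; rewrite orbT.
have xAA : x \in A :&: A' by rewrite in_setI xA xA'.
have dW0 : disconnects e W0 x w.
  apply: (fenced_disconnects W0_fenced xAA).
  - by rewrite in_setI (negbTE wA).
  - by rewrite in_setD xAA.
  - by rewrite in_setD [w \in X :&: _]in_setI (negbTE wX) andbF.
exists W0; split; first by exists x, w.
- by have := cut_ge dW0; have := W0_small; lia.
- by case: dW0.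
- exact: fenced_side W0_fenced xAA.
Qed.

End Uncross.

Definition candidate (x : T) (U : {set T}) : bool :=
  [&& cutb U, #|U| == k, x \notin U & #|Side e U x| <= t].

(* Small_t(x) exists as soon as one candidate exists: a candidate with the
   smallest side of x is Small_t(x), by uncrossing it with any other one. *)
Lemma small_exists (U : {set T}) x :
  is_cut e U -> #|U| = k -> x \notin U -> #|Side e U x| <= t ->
  exists Y, is_Small e k t x Y.
Proof.
move=> cU kU xU tU.
have candU : candidate x U by rewrite /candidate kU xU tU eqxx !andbT; apply/cutP.
case: (arg_minnP (fun V => #|Side e V x|) candU) => Y /and4P[/cutP cY /eqP kY xY tY] minY.
exists Y; split=> // V cV kV xV tV.
have [W [cW kW xW sub]] := uncross cY kY xY tY kV xV tV.
have subY : Side e W x \subset Side e Y x := subset_trans sub (subsetIl _ _).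
have candW : candidate x W.
  by rewrite /candidate kW xW eqxx (leq_trans (subset_leq_card subY) tY) !andbT; apply/cutP.
have -> : Side e Y x = Side e W x by apply/esym/eqP; rewrite eqEcard subY minY.
exact: subset_trans sub (subsetIr _ _).
Qed.

Lemma small_separates (S : {set T}) x y :
  disconnects e S x y -> #|S| = k -> #|Side e S x| <= t ->
  (exists Y, is_Small e k t x Y) /\
  (forall Y, is_Small e k t x Y -> disconnects e Y x y).
Proof.
move=> dS kS tS; have cS : is_cut e S by exists x, y.
have [xS [yS nxy]] := dS.
split; first exact: small_exists cS kS xS tS.
move=> Y [cY kY xY tY minY]; have sub := minY S cS kS xS tS.
have yA : y \notin Side e S x by rewrite inE /same_side xS yS.
have yY : y \notin Y.
  apply/negP => yY; have [a aY ay] := min_cut_attached kY xY yY.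
  by move: yA; rewrite (side_fenced (subsetP sub _ aY) ay yS).
do 2!split=> //; apply: contra yA => xy; apply: (subsetP sub).
by rewrite inE /same_side xY yY.
Qed.

Section Adjacent.
Variables (S : {set T}) (x y : T).
Hypotheses (xy : x != y) (exy : e x y) (xS : x \notin S) (yS : y \notin S).
Hypotheses (kS : #|S|.+1 = k) (room : t + k < #|T|).
Local Notation H := (del_rel e S true x y).
Local Notation C := (component H x).
Hypotheses (nxy : ~~ connect H x y) (tC : #|C| <= t).

Let xC : x \in C. Proof. by rewrite inE connect0. Qed.
Let yC : y \notin C. Proof. by rewrite inE. Qed.

Let C_step a b : a \in C -> e a b -> b \notin S -> (a != x) || (b != y) -> b \in C.
Proof.
move=> aC ab bS not_xy; have aS : a \in ~: S := subsetP (del_avoid true x y xS) a aC.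
have ay : (a == y) = false.
  by apply/negbTE; apply: contraNneq yC => ay; move: aC; rewrite ay.
move: aC; rewrite !inE => xa; apply: connect_trans xa (connect1 _).
by rewrite /del_rel /= -in_setC aS bS ab ay andFb orbF negb_and.
Qed.

Let C_edge_y a : a \in C -> e a y -> a = x.
Proof. by move=> aC ay; apply/eqP; apply: contraNT yC => ax; rewrite (C_step aC ay) ?ax. Qed.

Let C_fenced : fenced (y |: S) C.
Proof.
move=> a b aC ab; rewrite in_setU1 negb_or => /andP[by_ bS].
by rewrite (C_step aC ab) ?by_ ?orbT.
Qed.

Let kSy : #|y |: S| = k. Proof. by rewrite cardsU1 yS. Qed.
Let xSy : x \notin y |: S. Proof. by rewrite in_setU1 negb_or xy xS. Qed.
Let side_Sy : Side e (y |: S) x \subset C. Proof. exact: fenced_side C_fenced xC. Qed.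
Let tSy : #|Side e (y |: S) x| <= t. Proof. exact: leq_trans (subset_leq_card side_Sy) tC. Qed.

Let cut_Sy : is_cut e (y |: S).
Proof.
have [w _ wC] : exists2 w, w \in [set: T] & w \notin C :|: (y |: S).
  apply/subsetPn; apply: contraTN room => /subset_leq_card; rewrite cardsT.
  by case: (leq_card_setU C (y |: S)) => le _; rewrite -leqNgt; lia.
move: wC; rewrite in_setU negb_or => /andP[wC wSy].
by exists x, w; apply: (fenced_disconnects C_fenced xC).
Qed.

(* Small_t(x) exists, contains y, and with the edge xy it separates x from
   y: its side of x lies in C, which y can only be reached from via xy. *)
Lemma small_adjacent :
  (exists Y, is_Small e k t x Y) /\
  (forall Y, is_Small e k t x Y ->
     y \in Y /\ ~~ connect (del_rel e (Y :\ y) true x y) x y).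
Proof.
split; first exact: small_exists cut_Sy kSy xSy tSy.
move=> Y [cY kY xY tY minY].
have subC : Side e Y x \subset C := subset_trans (minY _ cut_Sy kSy xSy tSy) side_Sy.
have yY : y \in Y.
  apply: contraT => yY; apply: contraR yC => _.
  exact: subsetP subC _ (side_fenced (side_self xY) exy yY).
(* After deleting Y - y and the edge xy, the side of x is still closed:
   the only edge from it to y is xy. *)
have stable : forall a b, a \in Side e Y x ->
    del_rel e (Y :\ y) true x y a b -> b \in Side e Y x.
  move=> a b aA; rewrite /del_rel /= => /and4P[_ + ab].
  rewrite in_setD1 negb_and negbK => /orP[/eqP by_ | bY]; last by move=> _; exact: side_fenced aA ab bY.
  move: ab; rewrite by_ => ay; rewrite (C_edge_y (subsetP subC _ aA) ay).
  by rewrite !eqxx.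
split=> //; apply: contraL yY => xy'; apply: (@side_out _ x).
exact: connect_stable stable (side_self xY) xy'.
Qed.

End Adjacent.

(* From now on t is the ceiling of (n - kappa) / 2, so that of two disjoint
   sets avoiding a (kappa - 1)-set, one has at most t vertices. *)
Hypothesis t_large : #|T| - k <= 2 * t.

(* Non-adjacent pairs: the separator is a kappa-cut with a small side. *)
Lemma nonadjacent_pair (S : {set T}) u v :
  disconnects e S u v -> #|S| = k ->
  ((exists Y, is_Small e k t u Y) /\
     (forall Y, is_Small e k t u Y -> disconnects e Y u v)) \/
  ((exists Y, is_Small e k t v Y) /\
     (forall Y, is_Small e k t v Y -> disconnects e Y u v)).
Proof.
move=> dS kS; have card_sides := disjoint_card (side_disjoint dS) (side_sub S u) (side_sub S v).
have [tu | tv] : #|Side e S u| <= t \/ #|Side e S v| <= t by lia.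
  by left; apply: small_separates dS kS tu.
have [ex sep] := small_separates (disconnects_sym dS) kS tv.
by right; split=> // Y /sep /disconnects_sym.
Qed.

(* Adjacent pairs: one of the two components left by the separator is small. *)
Lemma adjacent_pair (S : {set T}) u v :
  u != v -> e u v -> u \notin S -> v \notin S -> #|S|.+1 = k -> k.+1 < #|T| ->
  ~~ connect (del_rel e S true u v) u v ->
  ((exists Y, is_Small e k t u Y) /\
     (forall Y, is_Small e k t u Y ->
        v \in Y /\ ~~ connect (del_rel e (Y :\ v) true u v) u v)) \/
  ((exists Y, is_Small e k t v Y) /\
     (forall Y, is_Small e k t v Y ->
        u \in Y /\ ~~ connect (del_rel e (Y :\ u) true v u) v u)).
Proof.
move=> uv euv uS vS kS k_small nuv.
have room : t + k < #|T| by lia.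
have swapE := eq_connect (del_rel_sym S v u).
have card_comps := disjoint_card (component_disjoint (del_connect_sym S true u v) nuv)
  (del_avoid true u v uS) (del_avoid true u v vS).
have [tu | tv] : #|component (del_rel e S true u v) u| <= t \/
                 #|component (del_rel e S true u v) v| <= t by lia.
  by left; apply: small_adjacent uv euv uS vS kS room nuv tu.
right; apply: small_adjacent vS uS kS room _ _; rewrite 1?eq_sym 1?e_sym //.
- by rewrite swapE del_connect_sym.
- by apply: leq_trans tv; apply/eq_leq/eq_card => z; rewrite !inE swapE.
Qed.

End Connectivity.
End Sides.

Theorem lemma7 (T : finType) (e : rel T) (k : nat) (u v : T) :
  simple_graph e -> graph_connected e -> non_complete e ->
  vertex_connectivity e k -> 4 * k < #|T| ->
  u != v -> local_connectivity e u v k ->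
  let t := uphalf (#|T| - k) in
  (~~ e u v ->
     ((exists Y, is_Small e k t u Y) /\
        (forall Y, is_Small e k t u Y -> disconnects e Y u v)) \/
     ((exists Y, is_Small e k t v Y) /\
        (forall Y, is_Small e k t v Y -> disconnects e Y u v))) /\
  (e u v ->
     ((exists Y, is_Small e k t u Y) /\
        (forall Y, is_Small e k t u Y ->
           v \in Y /\ ~~ connect (del_rel e (Y :\ v) true u v) u v)) \/
     ((exists Y, is_Small e k t v Y) /\
        (forall Y, is_Small e k t v Y ->
           u \in Y /\ ~~ connect (del_rel e (Y :\ u) true v u) v u))).
Proof.
move=> [e_sym _] _ _ conn k_small uv [[S [b [[uS [vS [b_uv nuv]]] kS]]] _] t.
have t_small : 2 * t <= #|T| - k + 1 by rewrite /t; lia.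
have t_large : #|T| - k <= 2 * t by rewrite /t; lia.
split=> [not_uv | uv_edge].
  (* The separator cannot use the missing edge: it is a kappa-cut. *)
  case: b b_uv nuv kS => [/(_ isT) | _]; first by rewrite (negbTE not_uv).
  rewrite (eq_connect (del_rel_false e _ _ _)) addn0 => nuv kS.
  exact: (nonadjacent_pair e_sym conn t_small t_large (conj uS (conj vS nuv)) kS).
(* The separator must delete the edge uv, together with kappa - 1 vertices. *)
case: b b_uv nuv kS => _ nuv; rewrite /= ?addn1 => kS; last first.
  by move: nuv; rewrite connect1 // /del_rel /= uS vS uv_edge.
by apply: (adjacent_pair e_sym conn t_small t_large uv uv_edge uS vS kS _ nuv); lia.
Qed.
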